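(* Suppose there exist $i, d \ge 2$ with $i \le d$ such that $o(\alpha_d) + a_i \ge c_R$ and $o(\alpha_d) < \infty$. Then $R = k[[\widetilde{x}_1, \ldots, \widetilde{x}_n]]$ where $\widetilde{x}_j = x_j$ for $j \ne d$ and $\widetilde{x}_d = t^{a_d}$, and $\widetilde{x}_1,\ldots,\widetilde{x}_n$ are again Herzog–Kunz generators of $R$.
   Context: Let $k$ be an algebraically closed field of characteristic $0$ and let $(R,\mathfrak m)$ be a complete local noetherian domain of dimension $1$ containing $k$ with $R/\mathfrak m = k$; its normalization is $\overline R = k[[t]]$, $R \subseteq k[[t]]$ finite birational. Let $v$ be the $t$-adic valuation; for $A \subseteq k((t))$ let $v(A) = \{v(f): f\in A\setminus\{0\}\}$. The conductor is $\mathfrak C_R = \{x\in\overline R : x\overline R\subseteq R\} = t^{c_R}\overline R$, $c_R$ the conductor degree. The Herzog–Kunz sequence of $R$ is $v(\mathfrak m)\setminus v(\mathfrak m^2)$ listed increasingly as $a_1<\cdots<a_n$; Herzog–Kunz generators are $x_i \in R$ with $v(x_i)=a_i$ (these satisfy $R = k[[x_1,\ldots,x_n]]$). Fix Herzog–Kunz generators $x_1, \ldots, x_n$ with $x_1 = t^{a_1}$ and, for $i \ge 2$, $x_i = \alpha_i t^{a_i}$ with $\alpha_i \in k[[t]]$ a unit of constant term $1$. Define $o(\alpha_i) = v(\alpha_i - 1)$ (so $o(\alpha_i) = \infty$ if $\alpha_i = 1$). *)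

(* Formal power series k[[t]] modelled as coefficient
   sequences nat -> k; subsets of k[[t]] as predicates (ps k -> Prop). *)
From HB Require Import structures.
From mathcomp Require Import all_boot all_order all_algebra.
Set Implicit Arguments. Unset Strict Implicit. Unset Printing Implicit Defensive.
Import Order.TTheory GRing.Theory Num.Theory.
Local Open Scope ring_scope.

Section PS.
Variable k : fieldType.

Definition ps := nat -> k.

Definition psC (c : k) : ps := fun n => if n == 0%N then c else 0.
Definition ps0 : ps := fun _ => 0.
Definition ps1 : ps := psC 1.
Definition psadd (f g : ps) : ps := fun n => f n + g n.
Definition psopp (f : ps) : ps := fun n => - f n.
Definition pssub (f g : ps) : ps := fun n => f n - g n.
Definition psmul (f g : ps) : ps :=
  fun n => \sum_(j < n.+1) f j * g (n - j)%N.
Definition pst (m : nat) : ps := fun n => if n == m then 1 else 0.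
Definition pspow (f : ps) (e : nat) : ps := iter e (psmul f) ps1.
Definition pssum (m : nat) (F : 'I_m -> ps) : ps :=
  fun n => \sum_(j < m) F j n.

Definition has_val (f : ps) (m : nat) : Prop :=
  f m != 0 /\ forall j, (j < m)%N -> f j = 0.

Definition vset (A : ps -> Prop) (m : nat) : Prop :=
  exists f, A f /\ has_val f m.

Definition is_k_subalgebra (R : ps -> Prop) : Prop :=
  (forall c, R (psC c)) /\
  (forall f g, R f -> R g -> R (psadd f g)) /\
  (forall f g, R f -> R g -> R (psmul f g)).

Definition ps_finite_over (R : ps -> Prop) : Prop :=
  exists (m : nat) (g : 'I_m -> ps), forall f : ps,
    exists r : 'I_m -> ps, (forall j, R (r j)) /\
      f = pssum (fun j => psmul (r j) (g j)).

(* R -> k[[t]] is birational: every f in k[[t]] is a quotient a/b of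
   elements of R (so Frac R = k((t))). *)
Definition ps_birational_over (R : ps -> Prop) : Prop :=
  forall f : ps, exists a b, R a /\ R b /\ b <> ps0 /\ psmul f b = a.

Definition in_conductor (R : ps -> Prop) (x : ps) : Prop :=
  forall f, R (psmul x f).
Definition is_conductor_degree (R : ps -> Prop) (c : nat) : Prop :=
  (forall x, in_conductor R x <-> exists f, x = psmul (pst c) f).

(* maximal ideal of the local ring R: its non-units *)
Definition maxid (R : ps -> Prop) (f : ps) : Prop :=
  R f /\ ~ (exists g, R g /\ psmul f g = ps1).

Definition maxid2 (R : ps -> Prop) (f : ps) : Prop :=
  exists (m : nat) (g h : 'I_m -> ps),
    (forall j, maxid R (g j) /\ maxid R (h j)) /\
    f = pssum (fun j => psmul (g j) (h j)).

Definition is_HK_sequence (R : ps -> Prop) (n : nat) (a : nat -> nat) : Prop :=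
  (forall j, (1 <= j)%N -> (j < n)%N -> (a j < a j.+1)%N) /\
  (forall m, (vset (maxid R) m /\ ~ vset (maxid2 R) m) <->
             exists j, [/\ (1 <= j)%N, (j <= n)%N & a j = m]).

Definition is_HK_generators (R : ps -> Prop) (n : nat) (a : nat -> nat)
  (x : nat -> ps) : Prop :=
  forall j, (1 <= j)%N -> (j <= n)%N -> R (x j) /\ has_val (x j) (a j).

(* Substitution of y_1..y_n (all of positive valuation) into a power series
   F in n variables (F given by its coefficients on multi-indices). The
   coefficient of t^N only involves monomials of total degree <= N. *)
Definition ps_subst (n : nat) (F : {ffun 'I_n -> nat} -> k) (y : nat -> ps) : ps :=
  fun N => \sum_(m : {ffun 'I_n -> 'I_N.+1} | (\sum_(j < n) (m j : nat) <= N)%N)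
     F [ffun j => (m j : nat)] *
     (\big[psmul/ps1]_(j < n) pspow (y j.+1) (m j)) N.

(* k[[y_1,...,y_n]] ⊆ k[[t]] : image of the substitution map *)
Definition ps_gen (n : nat) (y : nat -> ps) (f : ps) : Prop :=
  exists F : {ffun 'I_n -> nat} -> k, f = ps_subst F y.

End PS.

From HB Require Import structures.
From mathcomp Require Import all_boot all_order all_algebra.
From mathcomp Require Import boolp zify ring mpoly.
Import GRing.Theory.
Set Implicit Arguments. Unset Strict Implicit. Unset Printing Implicit Defensive.
Local Open Scope ring_scope.

(* Since x_d - t^(a_d) = (alpha_d - 1) t^(a_d) has order at least
   o(alpha_d) + a_d >= o(alpha_d) + a_i >= c, it lies in the conductor, so
   t^(a_d) is in R and the modified family is again Herzog-Kunz.
   Herzog-Kunz generators y_1 = t^(a_1), y_2, ..., y_n always generate R.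
   Every element of R is approximated to any t-adic order by polynomials in
   the y_j: a leading term of valuation s either has s = a_j (cancel it by
   y_j) or s in v(m^2) (cancel it by a sum of products of approximations of
   order s).  Approximating to order a_1 + c leaves a remainder t^(a_1) f'
   with f' in R, and iterating writes f as a power series in the y_j.
   Conversely such a power series is a polynomial in the y_j plus a series
   of order >= c, which lies in the conductor. *)

Section PowerSeriesRing.
Variable k : fieldType.
Local Notation ps := (ps k).

HB.instance Definition _ := Choice.copy ps (nat -> k).

Lemma psaddA : associative (@psadd k).
Proof. by move=> f g h; apply/funext=> N; rewrite /psadd addrA. Qed.
Lemma psaddC : commutative (@psadd k).
Proof. by move=> f g; apply/funext=> N; rewrite /psadd addrC. Qed.
Lemma psadd0 : left_id (@ps0 k) (@psadd k).
Proof. by move=> f; apply/funext=> N; rewrite /psadd /ps0 add0r. Qed.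
Lemma psaddN : left_inverse (@ps0 k) (@psopp k) (@psadd k).
Proof. by move=> f; apply/funext=> N; rewrite /psadd /ps0 /psopp addNr. Qed.

HB.instance Definition _ := GRing.isZmodule.Build ps psaddA psaddC psadd0 psaddN.

(* Commutativity and associativity of [psmul] are inherited from polynomial
   multiplication through truncations. *)
Definition ps_trunc (N : nat) (f : ps) : {poly k} := \poly_(i < N.+1) f i.

Lemma coef_psmul_trunc (f g : ps) N i : (i <= N)%N ->
  psmul f g i = (ps_trunc N f * ps_trunc N g)`_i.
Proof.
move=> iN; rewrite coefM /psmul; apply: eq_bigr => j _.
rewrite /ps_trunc !coef_poly.
have jN : (j < N.+1)%N by apply: (leq_trans (ltn_ord j)); rewrite ltnS.
have jN' : (i - j < N.+1)%N by rewrite ltnS (leq_trans (leq_subr _ _)).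
by rewrite jN jN'.
Qed.

Lemma coef_trunc_psmul (f g : ps) N i : (i <= N)%N ->
  (ps_trunc N (psmul f g))`_i = (ps_trunc N f * ps_trunc N g)`_i.
Proof.
by move=> iN; rewrite {1}/ps_trunc coef_poly ltnS iN (coef_psmul_trunc _ _ iN).
Qed.

Lemma coefM_low (A P Q : {poly k}) N :
  (forall i, (i <= N)%N -> P`_i = Q`_i) -> (A * P)`_N = (A * Q)`_N.
Proof.
move=> PQ; rewrite !coefM; apply: eq_bigr => j _; congr (_ * _).
by apply: PQ; rewrite leq_subr.
Qed.

Lemma psmulC : commutative (@psmul k).
Proof.
move=> f g; apply/funext=> N.
by rewrite !(coef_psmul_trunc _ _ (leqnn N)) mulrC.
Qed.

Lemma psmulA : associative (@psmul k).
Proof.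
move=> f g h; apply/funext=> N.
rewrite !(coef_psmul_trunc _ _ (leqnn N)).
rewrite (coefM_low _ (coef_trunc_psmul g h (N:=N))).
rewrite [(ps_trunc N (psmul f g) * _)]mulrC.
rewrite (coefM_low _ (coef_trunc_psmul f g (N:=N))).
by rewrite mulrA [ps_trunc N h * _]mulrC.
Qed.

Lemma psmul1 : left_id (@ps1 k) (@psmul k).
Proof.
move=> f; apply/funext=> N.
rewrite /psmul big_ord_recl /= /ps1 /psC /= mul1r subn0.
by rewrite big1 ?addr0 // => j _; rewrite mul0r.
Qed.

Lemma psmulDl : left_distributive (@psmul k) (@psadd k).
Proof.
move=> f g h; apply/funext=> N; rewrite /psmul /psadd -big_split /=.
by apply: eq_bigr => j _; rewrite mulrDl.
Qed.

Lemma ps1_neq0 : (@ps1 k) != ps0 k.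
Proof.
apply/eqP => /(congr1 (fun f => f 0%N)).
by rewrite /ps1 /psC /ps0 /=; apply/eqP; rewrite oner_eq0.
Qed.

HB.instance Definition _ := GRing.Zmodule_isComNzRing.Build ps
  psmulA psmulC psmul1 psmulDl ps1_neq0.

Lemma psmulE (f g : ps) : psmul f g = f * g. Proof. by []. Qed.
Lemma ps1E : ps1 k = 1. Proof. by []. Qed.
Lemma pspowE (f : ps) e : pspow f e = f ^+ e.
Proof. by elim: e => [|e IH] //=; rewrite /pspow /= -/(pspow f e) IH exprS. Qed.

Lemma addE (f g : ps) N : (f + g) N = f N + g N. Proof. by []. Qed.
Lemma subE (f g : ps) N : (f - g) N = f N - g N. Proof. by []. Qed.
Lemma zeroE N : (0 : ps) N = 0. Proof. by []. Qed.
Lemma oneE N : (1 : ps) N = (N == 0%N)%:R.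
Proof. by rewrite -ps1E /ps1 /psC; case: (N == 0%N). Qed.
Lemma mulE (f g : ps) N : (f * g) N = \sum_(j < N.+1) f j * g (N - j)%N.
Proof. by []. Qed.
Lemma sumE I (r : seq I) P (F : I -> ps) N :
  (\sum_(i <- r | P i) F i) N = \sum_(i <- r | P i) F i N.
Proof.
elim: r => [|x r IH]; first by rewrite !big_nil.
by rewrite !big_cons; case: (P x); rewrite ?addE IH.
Qed.

Lemma psC_is_zmod_morphism : zmod_morphism (@psC k).
Proof.
by move=> x y; apply/funext => N; rewrite subE /psC; case: ifP; rewrite ?subr0.
Qed.
HB.instance Definition _ :=
  GRing.isZmodMorphism.Build k ps (@psC k) psC_is_zmod_morphism.

Lemma coef_psCM c (f : ps) N : (psC c * f) N = c * f N.
Proof.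
rewrite mulE big_ord_recl /= subn0 big1 ?addr0 // => j _.
by rewrite /psC /= mul0r.
Qed.

Lemma psC_is_monoid_morphism : monoid_morphism (@psC k).
Proof.
split=> // x y; apply/funext => N; rewrite coef_psCM /psC.
by case: ifP => _; rewrite ?mulr0.
Qed.
HB.instance Definition _ :=
  GRing.isMonoidMorphism.Build k ps (@psC k) psC_is_monoid_morphism.

Lemma coef_pstM m (g : ps) N : (pst k m * g) N = if (m <= N)%N then g (N - m)%N else 0.
Proof.
rewrite mulE; case: ifP => hm.
  have hp : (m < N.+1)%N by rewrite ltnS.
  rewrite (bigD1 (Ordinal hp)) //= /pst eqxx mul1r big1 ?addr0 // => j /eqP hj.
  case: eqP => h; last by rewrite mul0r.
  by exfalso; apply: hj; apply: val_inj.
rewrite big1 // => j _; rewrite /pst; case: eqP => h; last by rewrite mul0r.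
by move: (ltn_ord j) hm; rewrite h ltnS => ->.
Qed.

Lemma pstD p q : pst k p * pst k q = pst k (p + q).
Proof.
apply/funext => N; rewrite coef_pstM /pst; case: ifP => h.
  by case: eqP => h1; case: eqP => h2 //; exfalso; lia.
by case: eqP => h2 //; exfalso; lia.
Qed.

Lemma coefM_trunc (f f' g g' : ps) N :
  (forall i, (i <= N)%N -> f i = f' i) -> (forall i, (i <= N)%N -> g i = g' i) ->
  (f * g) N = (f' * g') N.
Proof.
move=> hf hg; rewrite !mulE; apply: eq_bigr => j _.
by rewrite hf ?hg // ?leq_subr // -ltnS.
Qed.

End PowerSeriesRing.

Section Order.
Variable k : fieldType.
Local Notation ps := (ps k).
Implicit Types f g : ps.

(* t-adic order at least s; unlike [has_val], this holds for f = 0. *)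
Definition ord_ge f s := forall j, (j < s)%N -> f j = 0.

Lemma ord_ge0 f : ord_ge f 0. Proof. by []. Qed.

Lemma ord_geW f s s' : (s' <= s)%N -> ord_ge f s -> ord_ge f s'.
Proof. by move=> hs hf j hj; apply: hf; apply: leq_trans hs. Qed.

Lemma ord_geS f s : ord_ge f s -> f s = 0 -> ord_ge f s.+1.
Proof. by move=> hf fs j; rewrite ltnS leq_eqVlt => /orP [/eqP -> // | /hf]. Qed.

Lemma ord_geD f g s : ord_ge f s -> ord_ge g s -> ord_ge (f + g) s.
Proof. by move=> hf hg j hj; rewrite addE hf ?hg ?addr0. Qed.

Lemma ord_geB f g s : ord_ge f s -> ord_ge g s -> ord_ge (f - g) s.
Proof. by move=> hf hg j hj; rewrite subE hf ?hg ?subr0. Qed.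

Lemma ord_geZ x f s : ord_ge f s -> ord_ge (psC x * f) s.
Proof. by move=> hf j hj; rewrite coef_psCM hf ?mulr0. Qed.

Lemma ord_geM f g p q : ord_ge f p -> ord_ge g q -> ord_ge (f * g) (p + q).
Proof.
move=> hf hg N hN; rewrite mulE big1 // => j _.
case: (ltnP j p) => hj; first by rewrite hf ?mul0r.
rewrite hg ?mulr0 //; move: hj hN (ltn_ord j); move: (nat_of_ord j) => jj; lia.
Qed.

Lemma ord_geX f e : ord_ge f 1 -> ord_ge (f ^+ e) e.
Proof.
move=> hf; elim: e => [|e IH]; first exact: ord_ge0.
by rewrite exprS -add1n; apply: ord_geM.
Qed.

Lemma ord_ge_prod m (F : 'I_m -> ps) (s : 'I_m -> nat) :
  (forall i, ord_ge (F i) (s i)) -> ord_ge (\prod_i F i) (\sum_i s i).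
Proof.
move=> hF; apply: (big_ind2 (fun (b : ps) (a : nat) => ord_ge b a)) => //.
by move=> f1 f2 s1 s2; apply: ord_geM.
Qed.

Lemma ord_ge_subC f : ord_ge (f - psC (f 0%N)) 1.
Proof. by case=> // _; rewrite subE /psC /= subrr. Qed.

Lemma ord_ge_pst m : ord_ge (pst k m) m.
Proof. by move=> j hj; rewrite /pst; case: eqP => // h; move: hj; rewrite h ltnn. Qed.

Lemma has_val_pst m : has_val (pst k m) m.
Proof. by split; [rewrite /pst eqxx oner_eq0 | exact: ord_ge_pst]. Qed.

Lemma ord_ge_pstM f s : ord_ge f s -> f = pst k s * (fun N => f (N + s)%N).
Proof.
move=> hf; apply/funext => N; rewrite coef_pstM; case: ifP => h.
  by rewrite subnK.
by apply: hf; rewrite ltnNge h.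
Qed.

End Order.

Section Subalgebra.
Variable k : fieldType.
Local Notation ps := (ps k).
Variable R : ps -> Prop.
Hypothesis hsub : is_k_subalgebra R.
Variable c : nat.
Hypothesis hc : is_conductor_degree R c.
Implicit Types f g : ps.

Lemma RC a : R (psC a). Proof. by case: hsub. Qed.
Lemma RD f g : R f -> R g -> R (f + g). Proof. by case: hsub => _ [+ _]; apply. Qed.
Lemma RM f g : R f -> R g -> R (f * g). Proof. by case: hsub => _ [_]; apply. Qed.
Lemma R0 : R 0. Proof. by rewrite -(rmorph0 (@psC k)); apply: RC. Qed.
Lemma R1 : R 1. Proof. exact: (RC 1). Qed.
Lemma RB f g : R f -> R g -> R (f - g).
Proof.
move=> Rf Rg; apply: RD => //; rewrite -mulN1r -(rmorphN1 (@psC k)).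
by apply: RM => //; apply: RC.
Qed.
Lemma R_sum (I : Type) (r : seq I) (P : pred I) (F : I -> ps) :
  (forall i, P i -> R (F i)) -> R (\sum_(i <- r | P i) F i).
Proof. by move=> RF; apply: big_ind => //; [exact: R0 | exact: RD]. Qed.
Lemma R_prod (I : Type) (r : seq I) (P : pred I) (F : I -> ps) :
  (forall i, P i -> R (F i)) -> R (\prod_(i <- r | P i) F i).
Proof. by move=> RF; apply: big_ind => //; [exact: R1 | exact: RM]. Qed.
Lemma RX f e : R f -> R (f ^+ e).
Proof. by move=> Rf; elim: e => [|e IH]; [exact: R1 | rewrite exprS; apply: RM]. Qed.

Lemma R_ord_ge_conductor f : ord_ge f c -> R f.
Proof.
move=> hf; have : in_conductor R f.
  by apply/hc; exists (fun N => f (N + c)%N); exact: ord_ge_pstM.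
by move/(_ 1); rewrite psmulE mulr1.
Qed.

(* The inverse of g is psC (g 0)^-1 times the geometric series in u, which
   converges t-adically; its part of order >= c lies in the conductor. *)
Lemma R_unit g : R g -> g 0%N != 0 -> exists h, R h /\ g * h = 1.
Proof.
move=> Rg g0; set a := (g 0%N)^-1.
set u := 1 - psC a * g.
have u0 : ord_ge u 1 by case=> // _; rewrite /u subE oneE coef_psCM /= mulVf // subrr.
have Ru : R u by apply: RB; [exact: R1 | apply: RM => //; apply: RC].
pose S M := \sum_(i < M) u ^+ i.
have S_stable M i : (i < M)%N -> S M i = S i.+1 i.
  elim: M => // M IH; rewrite ltnS leq_eqVlt => /orP [/eqP -> // | h].
  by rewrite /S big_ord_recr /= addE (ord_geX u0) // addr0; exact: IH.
pose w : ps := fun N => S N.+1 N.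
have Rw : R w.
  have -> : w = S c + (w - S c) by rewrite addrC subrK.
  apply: RD; first by apply: R_sum => i _; apply: RX.
  by apply: R_ord_ge_conductor => j hj; rewrite subE /w (S_stable c j hj) subrr.
exists (psC a * w); split; first by apply: RM => //; apply: RC.
rewrite mulrA [g * _]mulrC.
have -> : psC a * g = 1 - u by rewrite /u; ring.
apply/funext => N.
rewrite (@coefM_trunc k (1 - u) (1 - u) w (S N.+1) N) //; last first.
  by move=> i hi; rewrite /w (S_stable N.+1 i).
have -> : (1 - u) * S N.+1 = 1 - u ^+ N.+1.
  by rewrite /S -opprB mulNr -subrX1 opprB.
by rewrite subE (ord_geX u0) ?subr0.
Qed.

Lemma R_pst_of_near f alpha m o : R f -> f = alpha * pst k m ->
  ord_ge (alpha - 1) o -> (c <= o + m)%N -> R (pst k m).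
Proof.
move=> Rf fE ho hoc; rewrite {}fE in Rf.
have -> : pst k m = alpha * pst k m - (alpha - 1) * pst k m by ring.
apply: RB => //; apply: R_ord_ge_conductor; apply: ord_geW hoc _.
by apply: ord_geM => //; exact: ord_ge_pst.
Qed.

Lemma maxid_coef0 g : maxid R g -> g 0%N = 0.
Proof.
move=> [Rg nu]; case: (eqVneq (g 0%N) 0) => // h; exfalso; apply: nu.
by have [h' [Rh e]] := R_unit Rg h; exists h'; rewrite psmulE e.
Qed.

End Subalgebra.

Section Evaluation.
Variable k : fieldType.
Local Notation ps := (ps k).
Variable n : nat.
Variable v : 'I_n -> ps.
Hypothesis v_ord_ge1 : forall i, ord_ge (v i) 1.

Definition ev (Q : {mpoly k[n]}) : ps := mmap (@psC k) v Q.
Definition ev_mono (m : 'X_{1..n}) : ps := \prod_(i < n) v i ^+ m i.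
Definition mnm_of N (e : {ffun 'I_n -> 'I_N}) : 'X_{1..n} :=
  [multinom (e i : nat) | i < n].

(* The coefficient formula of [ps_subst], in terms of multinomials. *)
Definition subst_coef N (H : 'X_{1..n} -> k) : k :=
  \sum_(e : {ffun 'I_n -> 'I_N.+1} | (\sum_(j < n) (e j : nat) <= N)%N)
     H (mnm_of e) * ev_mono (mnm_of e) N.

Lemma evD p q : ev (p + q) = ev p + ev q.
Proof. exact: rmorphD. Qed.
Lemma evM p q : ev (p * q) = ev p * ev q.
Proof. exact: rmorphM. Qed.
Lemma evX i : ev 'X_i = v i.
Proof. by rewrite /ev mmapX mmap1U. Qed.
Lemma evXn i K : ev ('X_i ^+ K) = v i ^+ K.
Proof. by rewrite -evX; exact: rmorphXn. Qed.

Lemma ord_ge_mono m : ord_ge (ev_mono m) (mdeg m).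
Proof. by rewrite mdegE; apply: ord_ge_prod => i; apply: ord_geX. Qed.

Lemma mdeg_mnm_of N (e : {ffun 'I_n -> 'I_N}) :
  mdeg (mnm_of e) = (\sum_(j < n) (e j : nat))%N.
Proof. by rewrite mdegE; apply: eq_bigr => i _; rewrite mnmE. Qed.

Lemma subst_coefX N m :
  subst_coef N (fun m' => ('X_[m] : {mpoly k[n]})@_m') = ev_mono m N.
Proof.
rewrite /subst_coef; case: (leqP (mdeg m) N) => hm; last first.
  rewrite big1; first by rewrite ord_ge_mono.
  move=> e he; rewrite mcoeffX; case: eqP => h; last by rewrite mul0r.
  by move: he; rewrite -mdeg_mnm_of -h leqNgt hm.
have him i : (m i <= N)%N.
  by apply: leq_trans hm; rewrite mdegE (bigD1 i) //= leq_addr.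
pose em : {ffun 'I_n -> 'I_N.+1} := [ffun i => inord (m i)].
have mem : mnm_of em = m by apply/mnmP => i; rewrite mnmE ffunE inordK // ltnS.
have dem : (\sum_(j < n) (em j : nat) <= N)%N by rewrite -mdeg_mnm_of mem.
rewrite (bigD1 em) //= mcoeffX mem eqxx mul1r big1 ?addr0 // => e /andP [_ ne].
rewrite mcoeffX; case: eqP => h; last by rewrite mul0r.
exfalso; move/eqP: ne; apply; apply/ffunP => i; apply: val_inj.
by rewrite ffunE /= h mnmE inordK // ltnS.
Qed.

Lemma coef_ev Q N : ev Q N = subst_coef N (fun m => Q@_m).
Proof.
elim/mpolyind: Q => [|a m p _ _ IH].
  by rewrite /ev mmap0 zeroE /subst_coef big1 // => e _; rewrite mcoeff0 mul0r.
rewrite /ev mmapD mmapZ mmapX addE -/(ev p) IH coef_psCM.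
rewrite -[mmap1 v m N]/(ev_mono m N) -(subst_coefX N m) /subst_coef big_distrr.
rewrite -big_split /=; apply: eq_bigr => e _.
by rewrite mcoeffD mcoeffZ mulrDl mulrA.
Qed.

Lemma ps_subst_coef F (y : nat -> ps) N : (forall i : 'I_n, y i.+1 = v i) ->
  ps_subst F y N = subst_coef N (fun m => F [ffun j => m j]).
Proof.
move=> yv; rewrite /ps_subst /subst_coef; apply: eq_bigr => e _; congr (_ * _).
  by congr F; apply/ffunP => j; rewrite !ffunE mnmE.
apply: (congr1 (fun f : ps => f N)); apply: eq_bigr => j _.
by rewrite pspowE mnmE yv.
Qed.

Lemma mcoeff_XnM_lt (i : 'I_n) K (p : {mpoly k[n]}) (m : 'X_{1..n}) :
  (m i < K)%N -> ('X_i ^+ K * p)@_m = 0.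
Proof.
move=> h; rewrite mulrC mpolyXn; apply: memN_msupp_eq0.
rewrite (perm_mem (msuppMX _ _)); apply/negP => /mapP [m' _ hm].
by move: h; rewrite hm mnmDE mulmnE mnm1E eqxx mul1n ltnNge leq_addr.
Qed.

Definition Xseries (i0 : 'I_n) (q : nat -> {mpoly k[n]}) K : {mpoly k[n]} :=
  \sum_(j < K) 'X_i0 ^+ j * q j.

Lemma mcoeff_Xseries_stable i0 q m K : (mdeg m < K)%N ->
  (Xseries i0 q K)@_m = (Xseries i0 q (mdeg m).+1)@_m.
Proof.
elim: K => // K IH; rewrite ltnS leq_eqVlt => /orP [/eqP -> // | hK].
rewrite /Xseries big_ord_recr /= mcoeffD -/(Xseries i0 q K) IH //.
rewrite mcoeff_XnM_lt ?addr0 //.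
by apply: leq_ltn_trans hK; rewrite mdegE (bigD1 i0) //= leq_addr.
Qed.

End Evaluation.

Section Approximation.
Variable k : fieldType.
Local Notation ps := (ps k).
Variable R : ps -> Prop.
Hypothesis hsub : is_k_subalgebra R.
Variable c : nat.
Hypothesis hc : is_conductor_degree R c.
Variables (n : nat) (a : nat -> nat) (y : nat -> ps).
Hypothesis ha : is_HK_sequence R n a.
Hypothesis hy : is_HK_generators R n a y.
Local Notation v := (fun i : 'I_n => y i.+1).
Implicit Types f g h : ps.

Lemma HK_seq_gt0 j : (1 <= j)%N -> (j <= n)%N -> (0 < a j)%N.
Proof.
move=> h1 h2; have [_ /(_ (a j)) [_ H]] := ha.
have [|[f [mf [hf0 _]]] _] := H; first by exists j.
rewrite lt0n; apply/eqP => aj; move: hf0; rewrite aj (maxid_coef0 hsub hc mf).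
by rewrite eqxx.
Qed.

Lemma HK_gen_ord_ge1 i : ord_ge (v i) 1.
Proof.
have [_ [_ hz]] := hy (isT : (1 <= i.+1)%N) (ltn_ord i).
by move=> j; rewrite ltnS leqn0 => /eqP ->; apply: hz; apply: HK_seq_gt0.
Qed.

Lemma R_ev Q : R (ev v Q).
Proof.
apply: (R_sum hsub) => m _; apply: (RM hsub); first exact: (RC hsub).
apply: (R_prod hsub) => i _; apply: (RX hsub).
by have [] := hy (isT : (1 <= i.+1)%N) (ltn_ord i).
Qed.

Definition approximable s f := exists Q, ord_ge (f - ev v Q) s.

Lemma approximable0 s : approximable s 0.
Proof. by exists 0; rewrite /ev mmap0 subr0. Qed.

Lemma approximableD s f g :
  approximable s f -> approximable s g -> approximable s (f + g).
Proof.
move=> [P hP] [Q hQ]; exists (P + Q); rewrite evD.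
by rewrite opprD addrACA; apply: ord_geD.
Qed.

Lemma approximableM s f g : (0 < s)%N -> f 0%N = 0 -> ord_ge g 1 ->
  approximable s f -> approximable s g -> approximable s.+1 (f * g).
Proof.
move=> spos f0 g1 [P hP] [Q hQ]; exists (P * Q); rewrite evM.
have -> : f * g - ev v P * ev v Q
    = (f - ev v P) * g + ev v P * (g - ev v Q) by ring.
have P1 : ord_ge (ev v P) 1.
  move=> j; rewrite ltnS leqn0 => /eqP ->.
  by have := hP 0%N spos; rewrite subE f0 sub0r => /eqP; rewrite oppr_eq0 => /eqP.
apply: ord_geD; first by rewrite -addn1; apply: ord_geM.
by rewrite -add1n; apply: ord_geM.
Qed.

(* The leading term of the error f - ev Q, of valuation s, is cancelled by a
   multiple of any h of valuation s that is approximable beyond s. *)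
Lemma approximable_cancel s f h Q Q' :
  ord_ge (f - ev v Q) s -> ord_ge h s -> h s != 0 ->
  ord_ge (h - ev v Q') s.+1 -> approximable s.+1 f.
Proof.
move=> hQ hs hs0 hQ'; set e := f - ev v Q; set lam := e s / h s.
exists (Q + lam *: Q'); rewrite /ev mmapD mmapZ -!/(ev _ _) opprD addrA -/e.
have -> : e - psC lam * ev v Q' = (e - psC lam * h) + psC lam * (h - ev v Q').
  by ring.
apply: ord_geD; last exact: ord_geZ.
apply: ord_geS; first by apply: ord_geB => //; apply: ord_geZ.
by rewrite subE coef_psCM /lam divfK // subrr.
Qed.

Lemma approximable_maxid2 s h : (0 < s)%N -> maxid2 R h ->
  (forall f, R f -> approximable s f) -> approximable s.+1 h.
Proof.
move=> spos [m [g [g' [hgg ->]]]] IH.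
have -> : pssum (fun l => psmul (g l) (g' l)) = \sum_l g l * g' l.
  by apply/funext => N; rewrite sumE.
apply: big_ind => //; [exact: approximable0 | exact: approximableD |].
move=> l _; have [[Rg _] [Rg' _]] := hgg l.
apply: approximableM => //; first exact: (maxid_coef0 hsub hc (hgg l).1).
  by move=> j; rewrite ltnS leqn0 => /eqP ->; exact: (maxid_coef0 hsub hc (hgg l).2).
all: exact: IH.
Qed.

Lemma approximable_R s f : R f -> approximable s f.
Proof.
elim: s f => [|s IH] f Rf; first by exists 0.
have [Q hQ] := IH f Rf; set e := f - ev v Q.
have [es|es] := eqVneq (e s) 0; first by exists Q; apply: ord_geS.
have [s0|spos] := eqVneq s 0%N.
  subst s; exists (Q + (e 0%N)%:MP).
  by rewrite /ev mmapD mmapC -/(ev v Q) opprD addrA; exact: ord_ge_subC.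
rewrite -lt0n in spos.
have me : maxid R e.
  split; first by apply: (RB hsub) => //; apply: R_ev.
  move=> [g [_ /(congr1 (fun f => f 0%N))]].
  rewrite psmulE mulE big_ord1 /= /e hQ // mul0r /ps1 /psC /=.
  by move/eqP; rewrite eq_sym oner_eq0.
have [hm2|hm2] := pselect (vset (maxid2 R) s).
  have [h [hm [hs0 hsz]]] := hm2.
  have [Q' hQ'] := approximable_maxid2 spos hm IH.
  exact: approximable_cancel hQ hsz hs0 hQ'.
have [_ /(_ s) [H _]] := ha.
have [|j [j1 jn ajs]] := H; first by split=> //; exists e.
subst s.
have [_ [yj0 yjz]] := hy j1 jn.
have ji : (j.-1 < n)%N by rewrite prednK // (leq_trans _ jn).
apply: (approximable_cancel (Q' := 'X_(Ordinal ji)) hQ yjz yj0).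
by rewrite evX /= prednK // subrr.
Qed.

Lemma ps_gen_R f : ps_gen n y f -> R f.
Proof.
move=> [F ->].
pose Q : {mpoly k[n]} :=
  \sum_(e : {ffun 'I_n -> 'I_c}) F [ffun j => (e j : nat)] *: 'X_[mnm_of e].
have hQ m : (mdeg m < c)%N -> Q@_m = F [ffun j => m j].
  move=> hm; have him i : (m i < c)%N.
    by apply: leq_ltn_trans hm; rewrite mdegE (bigD1 i) //= leq_addr.
  pose em : {ffun 'I_n -> 'I_c} := [ffun i => Ordinal (him i)].
  have mem : mnm_of em = m by apply/mnmP => i; rewrite mnmE ffunE.
  rewrite /Q (raddf_sum (mcoeff m)) (bigD1 em) //= big1.
    rewrite addr0 mcoeffZ mcoeffX mem eqxx mulr1; congr F.
    by apply/ffunP => j; rewrite !ffunE.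
  move=> e ne; rewrite mcoeffZ mcoeffX; case: eqP => h; last by rewrite mulr0.
  exfalso; move/eqP: ne; apply; apply/ffunP => i; apply: val_inj.
  by rewrite ffunE /= -h mnmE.
have -> : ps_subst F y = ev v Q + (ps_subst F y - ev v Q) by ring.
apply: (RD hsub); first exact: R_ev.
apply: (R_ord_ge_conductor hc) => N hN.
rewrite subE (ps_subst_coef _ _ (fun=> erefl)) coef_ev; last exact: HK_gen_ord_ge1.
rewrite /subst_coef -sumrB big1 // => e he; rewrite hQ ?subrr //.
by rewrite mdeg_mnm_of; apply: leq_ltn_trans he hN.
Qed.

(* Iterating f = ev Q_0 + v_i0 f_1, f_1 = ev Q_1 + v_i0 f_2, ... gives
   f = sum_j v_i0^j ev Q_j, which converges t-adically. *)
Lemma ps_gen_of_split (S : ps -> Prop) (i0 : 'I_n) :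
  (forall f, S f -> exists Q f', S f' /\ f = ev v Q + v i0 * f') ->
  forall f, S f -> ps_gen n y f.
Proof.
move=> split_S f Sf.
have : forall g : ps, exists p : {mpoly k[n]} * ps,
    S g -> S p.2 /\ g = ev v p.1 + v i0 * p.2.
  move=> g; case: (pselect (S g)) => [/split_S [Q [g' hg]] | nSg].
    by exists (Q, g').
  by exists (0, 0).
move/choice => [st hst].
pose fs := fix fs K := if K is K'.+1 then (st (fs K')).2 else f.
have Sfs K : S (fs K) by elim: K => [|K IH] //=; have [] := hst _ IH.
pose q K := (st (fs K)).1.
have fsK K : f = ev v (Xseries i0 q K) + v i0 ^+ K * fs K.
  elim: K => [|K IH]; first by rewrite /Xseries big_ord0 /ev mmap0 expr0 mul1r add0r.
  rewrite /Xseries big_ord_recr /= evD evM evXn -/(Xseries i0 q K).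
  have [_ e] := hst _ (Sfs K).
  by rewrite IH {1}e exprS /q; ring.
have coef_f N : f N = ev v (Xseries i0 q N.+1) N.
  rewrite {1}(fsK N.+1) addE.
  rewrite (_ : (v i0 ^+ N.+1 * fs N.+1) N = 0) ?addr0 //.
  have := ord_geM (@ord_geX _ _ N.+1 (HK_gen_ord_ge1 i0)) (ord_ge0 (fs N.+1)).
  by rewrite addn0; apply.
exists (fun e => (Xseries i0 q (\sum_j e j).+1)@_[multinom e i | i < n]).
apply/funext => N; rewrite (ps_subst_coef _ _ (fun=> erefl)) coef_f coef_ev.
  rewrite /subst_coef; apply: eq_bigr => e he; congr (_ * _).
  have -> : [multinom [ffun j => mnm_of e j] i | i < n] = mnm_of e.
    by apply/mnmP => i; rewrite mnmE ffunE.
  rewrite (_ : (\sum_j [ffun j => mnm_of e j] j)%N = mdeg (mnm_of e)); last first.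
    by rewrite mdegE; apply: eq_bigr => j _; rewrite ffunE.
  by rewrite mcoeff_Xseries_stable // ltnS mdeg_mnm_of.
exact: HK_gen_ord_ge1.
Qed.

Lemma R_ps_gen (n_gt0 : (0 < n)%N) (y1 : y 1%N = pst k (a 1%N)) f :
  R f -> ps_gen n y f.
Proof.
apply: (@ps_gen_of_split R (Ordinal n_gt0)) => {}f Rf.
have [Q hQ] := approximable_R (a 1%N + c) Rf.
exists Q, (pst k c * (fun N => (f - ev v Q) (N + (a 1%N + c))%N)); split.
  apply: (R_ord_ge_conductor hc).
  by have := ord_geM (@ord_ge_pst k c) (ord_ge0 _); rewrite addn0.
by rewrite /= y1 mulrA pstD -ord_ge_pstM //; ring.
Qed.

Lemma R_eq_ps_gen (n_gt0 : (0 < n)%N) (y1 : y 1%N = pst k (a 1%N)) f :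
  R f <-> ps_gen n y f.
Proof. by split; [exact: R_ps_gen | exact: ps_gen_R]. Qed.

End Approximation.

Lemma HK_seq_homo (k : fieldType) (R : ps k -> Prop) n a :
  is_HK_sequence R n a ->
  {in [pred j | 0 < j <= n]%N &, {homo a : j j' / (j <= j')%N}}.
Proof.
move=> [a_lt _]; apply: homo_leq_in => //; first exact: leq_trans.
  by move=> i j /andP [i0 _] /andP [_ jn] l /andP [il lj]; apply/andP; lia.
by move=> j /andP [j0 _] /andP [_ jn]; apply/ltnW/a_lt.
Qed.

Theorem mainTheorem10 (k : closedFieldType) (chark : [pchar k] =i pred0)
  (R : ps k -> Prop)
  (hsub : is_k_subalgebra R) (hfin : ps_finite_over R)
  (hbir : ps_birational_over R)
  (c : nat) (hc : is_conductor_degree R c)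
  (n : nat) (a : nat -> nat) (ha : is_HK_sequence R n a)
  (x : nat -> ps k) (hx : is_HK_generators R n a x)
  (alpha : nat -> ps k)
  (hx1 : (1 <= n)%N -> x 1%N = pst k (a 1%N))
  (halpha : forall j, (2 <= j)%N -> (j <= n)%N ->
     x j = psmul (alpha j) (pst k (a j)) /\ alpha j 0%N = 1)
  (i d : nat) (hi : (2 <= i)%N) (hid : (i <= d)%N) (hdn : (d <= n)%N)
  (ho : exists o, has_val (pssub (alpha d) (ps1 k)) o /\ (c <= o + a i)%N) :
  let xt := fun j => if j == d then pst k (a d) else x j in
  (forall f, R f <-> ps_gen n xt f) /\ is_HK_generators R n a xt.
Proof.
move=> xt; have d2 : (2 <= d)%N := leq_trans hi hid.
have n_gt0 : (0 < n)%N by apply: leq_trans hdn; apply: ltnW.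
have R_td : R (pst k (a d)).
  have [o [[_ ho_alpha] hoc]] := ho.
  have [xd _] := halpha d d2 hdn.
  apply: (R_pst_of_near hsub hc (hx d (ltnW d2) hdn).1 xd ho_alpha).
  apply: leq_trans hoc _; rewrite leq_add2l; apply: (HK_seq_homo ha) => //.
  by rewrite inE (ltnW hi) (leq_trans hid hdn).
  by rewrite inE (ltnW d2) hdn.
have hxt : is_HK_generators R n a xt.
  move=> j j1 jn; rewrite /xt; case: eqP => [->|_]; last exact: hx.
  by split; [exact: R_td | exact: has_val_pst].
split=> //; apply: (R_eq_ps_gen hsub hc ha hxt n_gt0).
by rewrite /xt ifN ?hx1 // neq_ltn; apply/orP; left; apply: leq_trans d2.
Qed.
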